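(* Let $0<\beta<\frac12$ and for $z\in\mathbb{C}$ with $|\Re(z)|\neq\beta$ set $$I(\beta,1;z)=\frac{1}{2\pi i}\int_{\beta-i\infty}^{\beta+i\infty}\left(\frac{\cos\pi z}{\cos\pi w}\right)\left(\frac{2w}{z^2-w^2}\right)\mathrm{d}w.$$ Then $I(\beta,1;z)=0$ for all $z$ with $\Re(z)>\beta$. *)

From Stdlib Require Import Reals.
From Coquelicot Require Import Coquelicot.
Open Scope R_scope.

Definition Cexp (z : C) : C :=
  (exp (Re z) * cos (Im z), exp (Re z) * sin (Im z)).

Definition Ccos (z : C) : C :=
  ((Cexp (Ci * z) + Cexp (- (Ci * z))) / 2)%C.

Definition I_kernel (z w : C) : C :=
  ((Ccos (RtoC PI * z) / Ccos (RtoC PI * w)) * ((2 * w) / (z * z - w * w)))%C.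

(* The vertical line is
   parametrized by w = beta + i t, t in R, so dw = i dt. *)
Definition is_I_beta1 (beta : R) (z : C) (v : C) : Prop :=
  is_RInt_gen
    (fun t : R => (/ (2 * RtoC PI * Ci) * (I_kernel z (RtoC beta + Ci * RtoC t) * Ci))%C)
    (Rbar_locally m_infty) (Rbar_locally p_infty) v.

From Stdlib Require Import Reals Lra.
From Coquelicot Require Import Coquelicot.
Open Scope R_scope.

(* The integrand w |-> (cos pi z / cos pi w) (2 w / (z^2 - w^2)) is odd in w, holomorphic
   in the strip |Re w| < min (1/2, Re z), and O(1 / (Im w)^2) uniformly in that strip.
   Cauchy's theorem on the rectangles [-beta, beta] x [a, b], whose horizontal sides
   contribute O(1/a^2 + 1/b^2), shows that the integrals along Re w = beta and
   Re w = -beta have the same limit; by oddness these limits are opposite, hence zero.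
   Cauchy's theorem itself comes from the Cauchy-Riemann equations, by differentiating the
   integral along a vertical line with respect to its abscissa. *)

(** * Complex differentiability in Cauchy-Riemann form *)

Ltac Cunfold :=
  unfold Cmult, Cplus, Copp, Cminus, Cdiv, Cinv, RtoC, Ci, Cexp, Re, Im in *;
  simpl fst in *; simpl snd in *.

(* Coquelicot states these rules for the operations of an abstract normed module; the
   [R]-typed versions unify with goals written with [Rplus], [Rmult], [0] and [1]. *)

Lemma is_derive_val (f : R -> R) x a b : is_derive f x a -> a = b -> is_derive f x b.
Proof. now intros H <-. Qed.

Lemma is_derive_Rext (f g : R -> R) x a : (forall t, f t = g t) -> is_derive f x a -> is_derive g x a.
Proof. apply is_derive_ext. Qed.

Lemma is_derive_Rconst (c x : R) : is_derive (fun _ => c) x 0.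
Proof. apply (is_derive_const c x). Qed.

Lemma is_derive_Rid (x : R) : is_derive (fun t => t) x 1.
Proof. apply (is_derive_id (K := R_AbsRing)). Qed.

Lemma is_derive_Rplus (f g : R -> R) x a b : is_derive f x a -> is_derive g x b ->
  is_derive (fun t => f t + g t) x (a + b).
Proof. intros; now apply (is_derive_plus f g). Qed.

Lemma is_derive_Rminus (f g : R -> R) x a b : is_derive f x a -> is_derive g x b ->
  is_derive (fun t => f t - g t) x (a - b).
Proof. intros; now apply (is_derive_minus f g). Qed.

Lemma is_derive_Ropp (f : R -> R) x a : is_derive f x a -> is_derive (fun t => - f t) x (- a).
Proof. intros; now apply (is_derive_opp f). Qed.

Lemma is_derive_Rmult (f g : R -> R) x a b : is_derive f x a -> is_derive g x b ->
  is_derive (fun t => f t * g t) x (a * g x + f x * b).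
Proof. intros; now apply Derive.is_derive_mult. Qed.

Lemma is_derive_Rcomp (h f : R -> R) x dh df : is_derive h (f x) dh -> is_derive f x df ->
  is_derive (fun t => h (f t)) x (df * dh).
Proof. intros; now apply (is_derive_comp h f). Qed.

Definition is_derive_C (f : R -> C) (x : R) (l : C) : Prop :=
  is_derive (fun u => fst (f u)) x (fst l) /\ is_derive (fun u => snd (f u)) x (snd l).

Lemma is_derive_C_val (f : R -> C) x l l' : l = l' -> is_derive_C f x l -> is_derive_C f x l'.
Proof. now intros ->. Qed.

Lemma is_derive_C_const (c : C) x : is_derive_C (fun _ => c) x 0%C.
Proof. split; apply is_derive_Rconst. Qed.

Lemma is_derive_C_plus (f g : R -> C) x a b : is_derive_C f x a -> is_derive_C g x b ->
  is_derive_C (fun u => f u + g u)%C x (a + b)%C.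
Proof. intros [] []; split; now apply is_derive_Rplus. Qed.

Lemma is_derive_C_opp (f : R -> C) x a : is_derive_C f x a -> is_derive_C (fun u => - f u)%C x (- a)%C.
Proof. intros []; split; now apply is_derive_Ropp. Qed.

Lemma is_derive_C_mult (f g : R -> C) x a b : is_derive_C f x a -> is_derive_C g x b ->
  is_derive_C (fun u => f u * g u)%C x (a * g x + f x * b)%C.
Proof.
  intros [f1 f2] [g1 g2]; Cunfold; split.
  - eapply is_derive_val; [apply is_derive_Rminus; apply is_derive_Rmult; eassumption | simpl; ring].
  - eapply is_derive_val; [apply is_derive_Rplus; apply is_derive_Rmult; eassumption | simpl; ring].
Qed.

Lemma is_derive_C_exp (f : R -> C) x a : is_derive_C f x a ->
  is_derive_C (fun u => Cexp (f u)) x (Cexp (f x) * a)%C.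
Proof.
  intros [f1 f2]; Cunfold; split.
  - eapply is_derive_val; [apply is_derive_Rmult; apply is_derive_Rcomp;
      [apply is_derive_exp | eassumption | apply is_derive_cos | eassumption] | simpl; ring].
  - eapply is_derive_val; [apply is_derive_Rmult; apply is_derive_Rcomp;
      [apply is_derive_exp | eassumption | apply is_derive_sin | eassumption] | simpl; ring].
Qed.

Lemma Cnorm2_neq0 (c : C) : c <> 0%C -> fst c ^ 2 + snd c ^ 2 <> 0.
Proof.
  intros Hc E; apply Hc; destruct c as [a b]; simpl in *.
  assert (a = 0) by nra; assert (b = 0) by nra; subst; reflexivity.
Qed.

Lemma is_derive_C_inv (f : R -> C) x a : is_derive_C f x a -> f x <> 0%C ->
  is_derive_C (fun u => / f u)%C x (- a / (f x * f x))%C.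
Proof.
  intros [f1 f2] Hf; pose proof (Cnorm2_neq0 _ Hf) as Hn.
  assert (Hnorm2 : is_derive (fun u => fst (f u) ^ 2 + snd (f u) ^ 2) x
                     (2 * fst (f x) * fst a + 2 * snd (f x) * snd a)).
  { eapply is_derive_val;
      [apply is_derive_Rplus; apply (is_derive_pow (fun u => _ (f u))); eassumption | simpl; ring]. }
  Cunfold; split; unfold Rdiv.
  - eapply is_derive_val;
      [apply is_derive_Rmult; [eassumption | apply is_derive_inv; [exact Hnorm2 | exact Hn]] |].
    simpl; field; repeat split; try exact Hn; intro E; apply Hn; nra.
  - eapply is_derive_val;
      [apply is_derive_Rmult; [apply is_derive_Ropp; eassumption
                              | apply is_derive_inv; [exact Hnorm2 | exact Hn]] |].
    simpl; field; repeat split; try exact Hn; intro E; apply Hn; nra.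
Qed.

Definition continuity_2d_pt_C (F : R -> R -> C) (x y : R) : Prop :=
  continuity_2d_pt (fun u v => fst (F u v)) x y /\ continuity_2d_pt (fun u v => snd (F u v)) x y.

Lemma continuity_2d_pt_C_const (c : C) x y : continuity_2d_pt_C (fun _ _ => c) x y.
Proof. split; apply continuity_2d_pt_const. Qed.

Lemma continuity_2d_pt_C_plus (F G : R -> R -> C) x y :
  continuity_2d_pt_C F x y -> continuity_2d_pt_C G x y ->
  continuity_2d_pt_C (fun u v => F u v + G u v)%C x y.
Proof. intros [] []; Cunfold; split; now apply continuity_2d_pt_plus. Qed.

Lemma continuity_2d_pt_C_opp (F : R -> R -> C) x y :
  continuity_2d_pt_C F x y -> continuity_2d_pt_C (fun u v => - F u v)%C x y.
Proof. intros []; Cunfold; split; now apply continuity_2d_pt_opp. Qed.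

Lemma continuity_2d_pt_C_mult (F G : R -> R -> C) x y :
  continuity_2d_pt_C F x y -> continuity_2d_pt_C G x y ->
  continuity_2d_pt_C (fun u v => F u v * G u v)%C x y.
Proof.
  intros [] []; Cunfold; split.
  - apply continuity_2d_pt_minus; apply continuity_2d_pt_mult; assumption.
  - apply continuity_2d_pt_plus; apply continuity_2d_pt_mult; assumption.
Qed.

Lemma continuity_2d_pt_C_inv (F : R -> R -> C) x y :
  continuity_2d_pt_C F x y -> F x y <> 0%C -> continuity_2d_pt_C (fun u v => / F u v)%C x y.
Proof.
  intros [c1 c2] Hn; pose proof (Cnorm2_neq0 _ Hn) as Hd.
  assert (Cd : continuity_2d_pt (fun u v => / (fst (F u v) ^ 2 + snd (F u v) ^ 2)) x y).
  { apply continuity_2d_pt_inv; [|exact Hd].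
    apply continuity_2d_pt_plus; apply continuity_2d_pt_mult; try assumption;
      apply continuity_2d_pt_mult; try assumption; apply continuity_2d_pt_const. }
  Cunfold; split; unfold Rdiv; apply continuity_2d_pt_mult; try assumption.
  now apply continuity_2d_pt_opp.
Qed.

Lemma continuity_2d_pt_C_exp (F : R -> R -> C) x y :
  continuity_2d_pt_C F x y -> continuity_2d_pt_C (fun u v => Cexp (F u v)) x y.
Proof.
  intros [c1 c2]; Cunfold; split; apply continuity_2d_pt_mult;
    apply continuity_1d_2d_pt_comp; try assumption; apply derivable_continuous_pt.
  - apply derivable_pt_exp.
  - apply derivable_pt_cos.
  - apply derivable_pt_exp.
  - apply derivable_pt_sin.
Qed.

(* [F u v] stands for a function of [w = u + i v]; complex differentiability with
   derivative [F'] means [dF/du = F'] and [dF/dv = i F']. *)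

Definition holo_on (O : R -> R -> Prop) (F F' : R -> R -> C) : Prop :=
  forall x y, O x y ->
    is_derive_C (fun u => F u y) x (F' x y) /\
    is_derive_C (fun v => F x v) y (Ci * F' x y)%C /\
    continuity_2d_pt_C F x y /\ continuity_2d_pt_C F' x y.

Definition is_holo_on (O : R -> R -> Prop) (F : R -> R -> C) : Prop :=
  exists F', holo_on O F F'.

Lemma holo_on_Cauchy_Riemann (O : R -> R -> Prop) (F F' : R -> R -> C) x y :
  holo_on O F F' -> O x y ->
  is_derive (fun u => fst (F u y)) x (fst (F' x y)) /\
  is_derive (fun u => snd (F u y)) x (snd (F' x y)) /\
  is_derive (fun v => fst (F x v)) y (- snd (F' x y)) /\
  is_derive (fun v => snd (F x v)) y (fst (F' x y)).
Proof.
  intros HF Hxy; destruct (HF x y Hxy) as ([Fu1 Fu2] & [Fv1 Fv2] & _).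
  split; [exact Fu1 | split; [exact Fu2 | split]];
    (eapply is_derive_val; [eassumption | simpl; ring]).
Qed.

Section HoloClosure.

Variable O : R -> R -> Prop.

Lemma is_holo_on_const (c : C) : is_holo_on O (fun _ _ => c).
Proof.
  exists (fun _ _ => 0%C); intros x y _.
  split; [|split; [|split]]; try apply continuity_2d_pt_C_const; try apply is_derive_C_const.
  apply (is_derive_C_val _ _ 0%C); [ring | apply is_derive_C_const].
Qed.

Lemma is_holo_on_id : is_holo_on O (fun u v => RtoC u + Ci * RtoC v)%C.
Proof.
  exists (fun _ _ => 1%C); intros x y _; Cunfold.
  split; [split|split; [split|split; [split|]]]; try apply continuity_2d_pt_C_const.
  - eapply is_derive_Rext; [|apply is_derive_Rid]; intros; simpl; ring.
  - eapply is_derive_val; [eapply is_derive_Rext; [|apply (is_derive_Rconst y)] | simpl; ring];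
      intros; simpl; ring.
  - eapply is_derive_val; [eapply is_derive_Rext; [|apply (is_derive_Rconst x)] | simpl; ring];
      intros; simpl; ring.
  - eapply is_derive_val; [eapply is_derive_Rext; [|apply is_derive_Rid] | simpl; ring];
      intros; simpl; ring.
  - eapply continuity_2d_pt_ext; [|apply continuity_2d_pt_id1]; intros; simpl; ring.
  - eapply continuity_2d_pt_ext; [|apply continuity_2d_pt_id2]; intros; simpl; ring.
Qed.

Lemma is_holo_on_plus (F G : R -> R -> C) :
  is_holo_on O F -> is_holo_on O G -> is_holo_on O (fun u v => F u v + G u v)%C.
Proof.
  intros [F' HF] [G' HG]; exists (fun u v => F' u v + G' u v)%C; intros x y Hxy.
  destruct (HF x y Hxy) as (Fx & Fy & CF & CF'), (HG x y Hxy) as (Gx & Gy & CG & CG').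
  split; [|split; [|split]].
  - now apply is_derive_C_plus.
  - eapply is_derive_C_val; [|apply is_derive_C_plus; [exact Fy | exact Gy]]; ring.
  - now apply continuity_2d_pt_C_plus.
  - now apply continuity_2d_pt_C_plus.
Qed.

Lemma is_holo_on_opp (F : R -> R -> C) : is_holo_on O F -> is_holo_on O (fun u v => - F u v)%C.
Proof.
  intros [F' HF]; exists (fun u v => - F' u v)%C; intros x y Hxy.
  destruct (HF x y Hxy) as (Fx & Fy & CF & CF').
  split; [|split; [|split]].
  - now apply is_derive_C_opp.
  - eapply is_derive_C_val; [|apply is_derive_C_opp; exact Fy]; ring.
  - now apply continuity_2d_pt_C_opp.
  - now apply continuity_2d_pt_C_opp.
Qed.

Lemma is_holo_on_mult (F G : R -> R -> C) :
  is_holo_on O F -> is_holo_on O G -> is_holo_on O (fun u v => F u v * G u v)%C.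
Proof.
  intros [F' HF] [G' HG]; exists (fun u v => F' u v * G u v + F u v * G' u v)%C; intros x y Hxy.
  destruct (HF x y Hxy) as (Fx & Fy & CF & CF'), (HG x y Hxy) as (Gx & Gy & CG & CG').
  split; [|split; [|split]].
  - exact (is_derive_C_mult (fun u => F u y) (fun u => G u y) _ _ _ Fx Gx).
  - eapply is_derive_C_val; [|exact (is_derive_C_mult (fun v => F x v) (fun v => G x v) _ _ _ Fy Gy)].
    simpl; ring.
  - now apply continuity_2d_pt_C_mult.
  - apply continuity_2d_pt_C_plus; now apply continuity_2d_pt_C_mult.
Qed.

Lemma is_holo_on_exp (F : R -> R -> C) : is_holo_on O F -> is_holo_on O (fun u v => Cexp (F u v)).
Proof.
  intros [F' HF]; exists (fun u v => Cexp (F u v) * F' u v)%C; intros x y Hxy.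
  destruct (HF x y Hxy) as (Fx & Fy & CF & CF').
  split; [|split; [|split]].
  - exact (is_derive_C_exp (fun u => F u y) _ _ Fx).
  - eapply is_derive_C_val; [|exact (is_derive_C_exp (fun v => F x v) _ _ Fy)]; simpl; ring.
  - now apply continuity_2d_pt_C_exp.
  - apply continuity_2d_pt_C_mult; [apply continuity_2d_pt_C_exp|]; assumption.
Qed.

Lemma is_holo_on_inv (F : R -> R -> C) : is_holo_on O F ->
  (forall x y, O x y -> F x y <> 0%C) -> is_holo_on O (fun u v => / F u v)%C.
Proof.
  intros [F' HF] Hnz; exists (fun u v => - F' u v / (F u v * F u v))%C; intros x y Hxy.
  destruct (HF x y Hxy) as (Fx & Fy & CF & CF'); specialize (Hnz x y Hxy).
  split; [|split; [|split]].
  - exact (is_derive_C_inv (fun u => F u y) _ _ Fx Hnz).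
  - eapply is_derive_C_val; [|exact (is_derive_C_inv (fun v => F x v) _ _ Fy Hnz)].
    simpl; unfold Cdiv; ring.
  - now apply continuity_2d_pt_C_inv.
  - unfold Cdiv; apply continuity_2d_pt_C_mult; [now apply continuity_2d_pt_C_opp|].
    apply continuity_2d_pt_C_inv; [now apply continuity_2d_pt_C_mult|].
    now apply Cmult_neq_0.
Qed.

Lemma is_holo_on_Ccos (F : R -> R -> C) : is_holo_on O F -> is_holo_on O (fun u v => Ccos (F u v)).
Proof.
  intros HF; unfold Ccos, Cdiv.
  apply is_holo_on_mult; [|apply is_holo_on_const].
  apply is_holo_on_plus; apply is_holo_on_exp; [|apply is_holo_on_opp];
    apply is_holo_on_mult; [apply is_holo_on_const | exact HF | apply is_holo_on_const | exact HF].
Qed.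

End HoloClosure.

(** * Line integrals in a strip *)

Lemma continuity_2d_pt_continuous_u (f : R -> R -> R) x y :
  continuity_2d_pt f x y -> continuous (fun u => f u y) x.
Proof.
  intros H; apply filterlim_locally; intros eps; destruct (H eps) as [d Hd].
  exists d; intros u Hu; apply Hd; [exact Hu|].
  rewrite Rminus_eq_0, Rabs_R0; apply cond_pos.
Qed.

Lemma continuity_2d_pt_continuous_v (f : R -> R -> R) x y :
  continuity_2d_pt f x y -> continuous (fun v => f x v) y.
Proof.
  intros H; apply filterlim_locally; intros eps; destruct (H eps) as [d Hd].
  exists d; intros v Hv; apply Hd; [|exact Hv].
  rewrite Rminus_eq_0, Rabs_R0; apply cond_pos.
Qed.

(* As functions of [x1], both sides have derivative [V x1 b - V x1 a]: on the left by
   differentiating under the integral sign and integrating [dV/dv] in [t]. *)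

Lemma RInt_vertical_sides_sub (U V P : R -> R -> R) (c d x0 x1 a b : R) :
  c < x0 -> x0 < x1 -> x1 < d ->
  (forall x t, c < x < d -> is_derive (fun u => U u t) x (P x t)) ->
  (forall x t, c < x < d -> is_derive (fun v => V x v) t (P x t)) ->
  (forall x t, c < x < d -> continuity_2d_pt P x t) ->
  (forall x t, c < x < d -> continuity_2d_pt U x t) ->
  (forall x t, c < x < d -> continuity_2d_pt V x t) ->
  RInt (U x1) a b - RInt (U x0) a b = RInt (fun x => V x b - V x a) x0 x1.
Proof.
  intros Hc0 H01 H1d HU HV CP CU CV.
  set (W := fun x => V x b - V x a).
  assert (CW : forall x, c < x < d -> continuous W x).
  { intros x Hx; apply (continuous_minus (fun x => V x b) (fun x => V x a));
      apply continuity_2d_pt_continuous_u; auto. }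
  assert (Hstrip : forall s, c < s < d -> locally s (fun y => c < y < d)).
  { intros s Hs; apply (locally_interval _ s (Finite c) (Finite d)); simpl; intros; lra. }
  set (Phi := fun s => RInt (U s) a b - RInt W x0 s).
  assert (Dparam : forall s, c < s < d -> is_derive (fun s => RInt (U s) a b) s (W s)).
  { intros s Hs.
    assert (HW : RInt (fun t => Derive (fun u => U u t) s) a b = W s).
    { rewrite (RInt_ext _ (P s)) by (intros t _; apply is_derive_unique; auto).
      apply is_RInt_unique, (is_RInt_derive (V s) (P s)); intros t _; [auto|].
      apply continuity_2d_pt_continuous_v; auto. }
    rewrite <- HW; apply is_derive_RInt_param.
    - generalize (Hstrip s Hs); apply filter_imp; intros y Hy t _; eexists; apply HU; auto.
    - intros t _; apply continuity_2d_pt_ext_loc with (f := P); [|auto].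
      assert (Hr : 0 < Rmin (s - c) (d - s)) by (apply Rmin_case; lra).
      exists (mkposreal _ Hr); intros u v Hu _; simpl in Hu.
      assert (c < u < d) by (revert Hu; apply Rmin_case_strong; intros; apply Rabs_def2 in Hu; lra).
      symmetry; apply is_derive_unique; auto.
    - generalize (Hstrip s Hs); apply filter_imp; intros y Hy.
      apply (ex_RInt_continuous (V := R_CompleteNormedModule)); intros t _.
      apply continuity_2d_pt_continuous_v; auto. }
  assert (Dflux : forall s, x0 <= s <= x1 -> is_derive (RInt W x0) s (W s)).
  { intros s Hs; apply (is_derive_RInt W (RInt W x0) x0 s); [|apply CW; lra].
    generalize (Hstrip s ltac:(lra)); apply filter_imp; intros y Hy.
    apply (RInt_correct (V := R_CompleteNormedModule)),
      (ex_RInt_continuous (V := R_CompleteNormedModule)).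
    intros t Ht; apply CW; split.
    - apply Rlt_le_trans with (Rmin x0 y); [apply Rmin_case; lra | apply Ht].
    - apply Rle_lt_trans with (Rmax x0 y); [apply Ht | apply Rmax_case; lra]. }
  assert (Hconst : Phi x0 = Phi x1).
  { apply eq_is_derive; [|exact H01]; intros s Hs.
    eapply is_derive_val;
      [apply is_derive_Rminus; [apply Dparam; lra | apply Dflux; lra] | apply Rminus_eq_0]. }
  unfold Phi in Hconst; rewrite RInt_point in Hconst.
  change (@zero R_CompleteNormedModule) with 0 in Hconst; lra.
Qed.

Lemma RInt_odd_reflect (g : R -> R -> R) (s a b : R) :
  (forall s t, g (-s) (-t) = - g s t) -> ex_RInt (g s) (-a) (-b) ->
  RInt (g (-s)) a b = - RInt (g s) (-b) (-a).
Proof.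
  intros Hodd Hex.
  rewrite (RInt_ext _ (fun t => opp (g s (-t)))).
  2: { intros t _; rewrite <- (Ropp_involutive t) at 1; apply Hodd. }
  rewrite (is_RInt_unique (V := R_CompleteNormedModule) _ a b (RInt (g s) (-a) (-b))).
  - rewrite <- (opp_RInt_swap (V := R_CompleteNormedModule)); [reflexivity|].
    now apply (ex_RInt_swap (V := R_CompleteNormedModule)).
  - apply (is_RInt_comp_opp (V := R_NormedModule)), (RInt_correct (V := R_CompleteNormedModule)).
    exact Hex.
Qed.

Lemma is_RInt_inv_sq (M p q : R) : 0 < p <= q \/ p <= q < 0 ->
  is_RInt (fun t => M / (t * t)) p q (M * (/ p - / q)).
Proof.
  intros Hpq.
  assert (Hnz : forall t, Rmin p q <= t <= Rmax p q -> t <> 0).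
  { intros t Ht; rewrite Rmin_left, Rmax_right in Ht; lra. }
  replace (M * (/ p - / q)) with (minus (- M * / q) (- M * / p))
    by (unfold minus, plus, opp; simpl; ring).
  apply (is_RInt_derive (V := R_CompleteNormedModule) (fun t => - M * / t)); intros t Ht;
    pose proof (Hnz t Ht).
  - eapply is_derive_val; [apply is_derive_Rmult;
      [apply is_derive_Rconst | apply is_derive_inv; [apply is_derive_Rid | exact H]] |].
    simpl; field; exact H.
  - apply (ex_derive_continuous (K := R_AbsRing) (V := R_NormedModule)).
    eexists; apply is_derive_Rmult; [apply is_derive_Rconst | apply is_derive_inv].
    + apply is_derive_Rmult; apply is_derive_Rid.
    + now apply Rmult_integral_contrapositive.
Qed.

Section OddLineIntegral.

Variables (g : R -> R -> R) (be M T0 : R).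
Hypothesis (Hbe : 0 <= be) (HM : 0 <= M) (HT0 : 0 < T0).
Hypothesis g_odd : forall s t, g (-s) (-t) = - g s t.
Hypothesis g_cont : forall t, continuous (g be) t.
Hypothesis g_decay : forall t, T0 <= Rabs t -> Rabs (g be t) <= M / (t * t).

Lemma ex_RInt_line (p q : R) : ex_RInt (g be) p q.
Proof. apply (ex_RInt_continuous (V := R_CompleteNormedModule)); auto. Qed.

Lemma RInt_line_tail (T p q : R) : T0 <= T -> T <= p <= q \/ p <= q <= - T ->
  Rabs (RInt (g be) p q) <= M / T.
Proof.
  intros HT Hpq.
  assert (Hinv : / p - / q <= / T).
  { destruct Hpq as [Hpq|Hpq].
    - assert (/ p <= / T) by (apply Rinv_le_contravar; lra).
      assert (0 < / q) by (apply Rinv_0_lt_compat; lra); lra.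
    - assert (/ - q <= / T) by (apply Rinv_le_contravar; lra).
      assert (/ p < 0) by (apply Rinv_lt_0_compat; lra).
      rewrite Rinv_opp in *; lra. }
  apply Rle_trans with (M * (/ p - / q)); [|apply Rmult_le_compat_l; assumption].
  apply (norm_RInt_le (g be) (fun t => M / (t * t)) p q); [lra| | |].
  - intros t Ht; apply g_decay.
    destruct Hpq; [rewrite Rabs_pos_eq | rewrite Rabs_left]; lra.
  - apply (RInt_correct (V := R_CompleteNormedModule)), ex_RInt_line.
  - apply is_RInt_inv_sq; lra.
Qed.

(* By oddness, the integral of [g (-be)] over [[a, b]] is minus that of [g be] over
   [[-b, -a]]; up to tails of size [M / T] both ranges reduce to [[-T, T]], so twice the
   integral is bounded by the rectangle error plus four tails. *)

Lemma RInt_line_small :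
  (forall a b, T0 <= - a -> T0 <= b ->
     Rabs (RInt (g be) a b - RInt (g (-be)) a b) <= 2 * be * (M / (a * a) + M / (b * b))) ->
  forall eps, 0 < eps -> exists T, forall a b, a < - T -> T < b -> Rabs (RInt (g be) a b) < eps.
Proof.
  intros Hsides eps Heps.
  set (T := T0 + 1 + 2 * (be + 1) * M / eps).
  assert (HMe : 0 <= 2 * (be + 1) * M / eps)
    by (apply Rmult_le_pos; [nra | left; apply Rinv_0_lt_compat; lra]).
  assert (HT : T0 + 1 <= T) by (unfold T; lra).
  set (m := M / T).
  assert (Hm : 0 <= m) by (apply Rmult_le_pos; [lra | left; apply Rinv_0_lt_compat; lra]).
  assert (Hsmall : 2 * (be + 1) * m < eps).
  { assert (ET : eps * T = eps * (T0 + 1) + 2 * (be + 1) * M) by (unfold T; field; lra).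
    assert (Em : m * T = M) by (unfold m; field; lra).
    assert (0 < T) by lra; nra. }
  assert (Hsq : forall t, T <= t * t -> M / (t * t) <= m).
  { intros t Ht; apply Rmult_le_compat_l; [exact HM|]; apply Rinv_le_contravar; lra. }
  exists T; intros a b Ha Hb.
  set (j := RInt (g be)).
  assert (Hchasles : forall p q, j p q = j p (- T) + j (- T) T + j T q).
  { intros p q; unfold j.
    rewrite <- (RInt_Chasles (V := R_CompleteNormedModule) (g be) p T q) by apply ex_RInt_line.
    rewrite <- (RInt_Chasles (V := R_CompleteNormedModule) (g be) p (- T) T) by apply ex_RInt_line.
    reflexivity. }
  assert (Hsum : Rabs (j a b + j (- b) (- a)) <= 2 * be * (2 * m)).
  { replace (j a b + j (- b) (- a)) with (RInt (g be) a b - RInt (g (- be)) a b)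
      by (rewrite (RInt_odd_reflect g be a b g_odd (ex_RInt_line _ _)); unfold j; ring).
    eapply Rle_trans; [apply Hsides; lra|].
    apply Rmult_le_compat_l; [lra|].
    assert (M / (a * a) <= m) by (apply Hsq; nra).
    assert (M / (b * b) <= m) by (apply Hsq; nra).
    lra. }
  assert (Tail1 := RInt_line_tail T a (- T) ltac:(lra) ltac:(lra)).
  assert (Tail2 := RInt_line_tail T T b ltac:(lra) ltac:(lra)).
  assert (Tail3 := RInt_line_tail T (- b) (- T) ltac:(lra) ltac:(lra)).
  assert (Tail4 := RInt_line_tail T T (- a) ltac:(lra) ltac:(lra)).
  fold m j in Tail1, Tail2, Tail3, Tail4.
  rewrite Hchasles in Hsum |- *; rewrite (Hchasles (- b)) in Hsum.
  apply Rabs_le_between in Hsum, Tail1, Tail2, Tail3, Tail4.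
  apply Rabs_def1; nra.
Qed.

End OddLineIntegral.

Lemma strip_RInt_line_small (U V P : R -> R -> R) (b1 be M T0 : R) :
  0 < be < b1 -> 0 <= M -> 0 < T0 ->
  (forall x t, -b1 < x < b1 -> is_derive (fun u => U u t) x (P x t)) ->
  (forall x t, -b1 < x < b1 -> is_derive (fun v => V x v) t (P x t)) ->
  (forall x t, -b1 < x < b1 -> continuity_2d_pt P x t) ->
  (forall x t, -b1 < x < b1 -> continuity_2d_pt U x t) ->
  (forall x t, -b1 < x < b1 -> continuity_2d_pt V x t) ->
  (forall s t, U (-s) (-t) = - U s t) ->
  (forall s t, T0 <= Rabs t -> Rabs (U s t) <= M / (t * t)) ->
  (forall s t, T0 <= Rabs t -> Rabs (V s t) <= M / (t * t)) ->
  forall eps, 0 < eps -> exists T, forall a b, a < - T -> T < b -> Rabs (RInt (U be) a b) < eps.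
Proof.
  intros Hbe HM HT0 HU HV CP CU CV Hodd BU BV.
  apply (RInt_line_small U be M T0); try lra; auto.
  - intros t; apply continuity_2d_pt_continuous_v, CU; lra.
  - intros a b Ha Hb.
    rewrite (RInt_vertical_sides_sub U V P (-b1) b1 (-be) be a b) by (auto || lra).
    replace (2 * be) with (be - - be) by ring.
    apply abs_RInt_le_const; [lra| |].
    + apply (ex_RInt_continuous (V := R_CompleteNormedModule)); intros x Hx.
      rewrite Rmin_left, Rmax_right in Hx by lra.
      apply (continuous_minus (fun x => V x b) (fun x => V x a));
        apply continuity_2d_pt_continuous_u, CV; lra.
    + intros x _; eapply Rle_trans; [apply Rabs_triang|]; rewrite Rabs_Ropp, Rplus_comm.
      apply Rplus_le_compat; apply BV; [rewrite Rabs_left | rewrite Rabs_pos_eq]; lra.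
Qed.

Lemma im_le_Cmod (c : C) : Rabs (Im c) <= Cmod c.
Proof. eapply Rle_trans; [apply Rmax_r | apply Rmax_Cmod]. Qed.

Lemma is_RInt_gen_C_0 (f : R -> C) :
  (forall t, continuous (fun t => fst (f t)) t) ->
  (forall t, continuous (fun t => snd (f t)) t) ->
  (forall eps, 0 < eps -> exists T, forall a b, a < - T -> T < b ->
     Rabs (RInt (fun t => fst (f t)) a b) < eps) ->
  (forall eps, 0 < eps -> exists T, forall a b, a < - T -> T < b ->
     Rabs (RInt (fun t => snd (f t)) a b) < eps) ->
  is_RInt_gen f (Rbar_locally m_infty) (Rbar_locally p_infty) (RtoC 0).
Proof.
  intros C1 C2 S1 S2 P [eps HP].
  destruct (S1 eps (cond_pos eps)) as [T1 L1], (S2 eps (cond_pos eps)) as [T2 L2].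
  apply Filter_prod with (fun a => a < - Rmax T1 T2) (fun b => Rmax T1 T2 < b).
  - exists (- Rmax T1 T2); auto.
  - exists (Rmax T1 T2); auto.
  - intros a b Ha Hb; simpl.
    assert (H1 := Rmax_l T1 T2); assert (H2 := Rmax_r T1 T2).
    exists (RInt (fun t => fst (f t)) a b, RInt (fun t => snd (f t)) a b); split.
    + apply (is_RInt_fct_extend_pair (U := R_NormedModule) (V := R_NormedModule));
        apply (RInt_correct (V := R_CompleteNormedModule)),
          (ex_RInt_continuous (V := R_CompleteNormedModule));
        auto.
    + apply HP; split; unfold ball; simpl; unfold AbsRing_ball, minus, plus, opp, abs; simpl;
        rewrite Ropp_0, Rplus_0_r; [apply L1 | apply L2]; lra.
Qed.

Lemma holo_odd_line_integral_0 (F F' : R -> R -> C) (b1 be M T0 : R) :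
  0 < be < b1 -> 0 <= M -> 0 < T0 ->
  holo_on (fun x _ => -b1 < x < b1) F F' ->
  (forall s t, F (-s) (-t) = (- F s t)%C) ->
  (forall s t, T0 <= Rabs t -> Cmod (F s t) <= M / (t * t)) ->
  is_RInt_gen (F be) (Rbar_locally m_infty) (Rbar_locally p_infty) (RtoC 0).
Proof.
  intros Hbe HM HT0 HF Hodd Hdecay.
  assert (Hline : forall t, continuity_2d_pt_C F be t) by (intros t; apply (HF be t); lra).
  apply is_RInt_gen_C_0.
  - intros t; apply (continuity_2d_pt_continuous_v (fun u v => fst (F u v))), Hline.
  - intros t; apply (continuity_2d_pt_continuous_v (fun u v => snd (F u v))), Hline.
  (* By Cauchy-Riemann, both (Re F, Im F) and (Im F, - Re F) satisfy [dU/du = dV/dv]. *)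
  - apply (strip_RInt_line_small (fun s t => fst (F s t)) (fun s t => snd (F s t))
             (fun s t => fst (F' s t)) b1 be M T0); auto; intros.
    + now apply (holo_on_Cauchy_Riemann _ F F' x t HF).
    + now apply (holo_on_Cauchy_Riemann _ F F' x t HF).
    + now apply HF.
    + now apply HF.
    + now apply HF.
    + now rewrite Hodd.
    + eapply Rle_trans; [apply re_le_Cmod | auto].
    + eapply Rle_trans; [apply im_le_Cmod | auto].
  - apply (strip_RInt_line_small (fun s t => snd (F s t)) (fun s t => - fst (F s t))
             (fun s t => snd (F' s t)) b1 be M T0); auto; intros.
    + now apply (holo_on_Cauchy_Riemann _ F F' x t HF).
    + destruct (holo_on_Cauchy_Riemann _ F F' x t HF H) as (_ & _ & Fv & _).
      eapply is_derive_val; [apply is_derive_Ropp; exact Fv | simpl; ring].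
    + now apply HF.
    + now apply HF.
    + apply continuity_2d_pt_opp; now apply HF.
    + now rewrite Hodd.
    + eapply Rle_trans; [apply im_le_Cmod | auto].
    + rewrite Rabs_Ropp; eapply Rle_trans; [apply re_le_Cmod | auto].
Qed.

(** * The integrand of I(beta, 1; z) *)

Definition I_integrand (z : C) (s t : R) : C :=
  (/ (2 * RtoC PI * Ci) * (I_kernel z (RtoC s + Ci * RtoC t) * Ci))%C.

Lemma RtoC_plus_Ci_mult (s t : R) : (RtoC s + Ci * RtoC t)%C = (s, t).
Proof. Cunfold; f_equal; ring. Qed.

Lemma Ccos_PI_mult (s t : R) : Ccos (RtoC PI * (RtoC s + Ci * RtoC t)) =
  (cos (PI * s) * cosh (PI * t), - (sin (PI * s) * sinh (PI * t))).
Proof.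
  rewrite RtoC_plus_Ci_mult; unfold Ccos, cosh, sinh.
  replace (Ci * (RtoC PI * (s, t)))%C with ((- (PI * t))%R, (PI * s)%R) by (Cunfold; f_equal; ring).
  replace (- ((- (PI * t))%R, (PI * s)%R))%C with ((PI * t)%R, (- (PI * s))%R)
    by (Cunfold; f_equal; ring).
  Cunfold; unfold Cmult; simpl; rewrite cos_neg, sin_neg; f_equal; field.
Qed.

Lemma Ccos_opp (u : C) : Ccos (- u) = Ccos u.
Proof.
  unfold Ccos; replace (Ci * - u)%C with (- (Ci * u))%C by ring.
  replace (- - (Ci * u))%C with (Ci * u)%C by ring; f_equal; ring.
Qed.

Lemma Ccos_PI_mult_neq0 (s t : R) :
  -1/2 < s < 1/2 -> Ccos (RtoC PI * (RtoC s + Ci * RtoC t)) <> 0%C.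
Proof.
  intros Hs E; apply (f_equal fst) in E; rewrite Ccos_PI_mult in E; simpl in E.
  assert (0 < cos (PI * s)) by (apply cos_gt_0; pose proof PI_RGT_0; nra).
  assert (0 < cosh (PI * t))
    by (unfold cosh; pose proof (exp_pos (PI * t)); pose proof (exp_pos (- (PI * t))); lra).
  nra.
Qed.

Lemma Csqr_sub_neq0 (z w : C) : Rabs (Re w) < Re z -> (z * z - w * w)%C <> 0%C.
Proof.
  intros Hw E.
  assert (E2 : ((z - w) * (z + w))%C = 0%C) by (rewrite <- E; ring).
  apply (f_equal Cmod) in E2; rewrite Cmod_mult, Cmod_0 in E2.
  apply Rmult_integral in E2; destruct E2 as [E2|E2]; apply Cmod_eq_0, (f_equal fst) in E2;
    unfold Re in Hw; apply Rabs_def2 in Hw; simpl in E2; lra.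
Qed.

Lemma is_holo_on_I_integrand (z : C) (b1 : R) : b1 <= 1/2 -> b1 <= Re z ->
  is_holo_on (fun x _ => -b1 < x < b1) (I_integrand z).
Proof.
  intros Hb1 Hz; unfold I_integrand, I_kernel, Cdiv, Cminus.
  apply is_holo_on_mult; [apply is_holo_on_const|].
  apply is_holo_on_mult; [|apply is_holo_on_const].
  apply is_holo_on_mult; apply is_holo_on_mult.
  - apply is_holo_on_const.
  - apply is_holo_on_inv.
    + apply is_holo_on_Ccos, is_holo_on_mult; [apply is_holo_on_const | apply is_holo_on_id].
    + intros x y Hx; apply Ccos_PI_mult_neq0; lra.
  - apply is_holo_on_mult; [apply is_holo_on_const | apply is_holo_on_id].
  - apply is_holo_on_inv.
    + apply is_holo_on_plus; [apply is_holo_on_const|].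
      apply is_holo_on_opp, is_holo_on_mult; apply is_holo_on_id.
    + intros x y Hx; apply Csqr_sub_neq0.
      rewrite RtoC_plus_Ci_mult; apply Rabs_def1; simpl; lra.
Qed.

Lemma I_integrand_odd (z : C) (s t : R) : I_integrand z (- s) (- t) = (- I_integrand z s t)%C.
Proof.
  unfold I_integrand, I_kernel.
  replace (RtoC (- s) + Ci * RtoC (- t))%C with (- (RtoC s + Ci * RtoC t))%C
    by (Cunfold; f_equal; ring).
  set (w := (RtoC s + Ci * RtoC t)%C).
  replace (RtoC PI * - w)%C with (- (RtoC PI * w))%C by ring.
  rewrite Ccos_opp; unfold Cdiv.
  replace (z * z - - w * - w)%C with (z * z - w * w)%C by ring; ring.
Qed.

Lemma Rabs_le_sinh_PI_mult (t : R) : Rabs t <= Rabs (sinh (PI * t)).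
Proof.
  assert (Hpos : forall u, 0 <= u -> u <= sinh (PI * u)).
  { intros u Hu; unfold sinh; pose proof PI2_3_2; pose proof (exp_ineq1_le (PI * u)).
    assert (E : exp (PI * u) * exp (- (PI * u)) = 1)
      by (rewrite <- exp_plus, Rplus_opp_r; apply exp_0).
    assert (1 <= exp (PI * u)) by nra.
    assert (exp (- (PI * u)) <= 1) by (pose proof (exp_pos (- (PI * u))); nra).
    nra. }
  destruct (Rle_or_lt 0 t) as [Ht|Ht].
  - pose proof (Hpos t Ht); rewrite !Rabs_pos_eq; lra.
  - pose proof (Hpos (- t) ltac:(lra)) as H.
    replace (PI * - t) with (- (PI * t)) in H by ring; unfold sinh in *.
    rewrite Ropp_involutive in H; rewrite !Rabs_left; lra.
Qed.

Lemma Rabs_le_Cmod_Ccos_PI_mult (s t : R) :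
  Rabs t <= Cmod (Ccos (RtoC PI * (RtoC s + Ci * RtoC t))).
Proof.
  rewrite Ccos_PI_mult; unfold Cmod; simpl fst; simpl snd.
  eapply Rle_trans; [apply Rabs_le_sinh_PI_mult|].
  rewrite <- sqrt_Rsqr_abs; apply sqrt_le_1_alt; unfold Rsqr.
  assert (sinh (PI * t) * sinh (PI * t) <= cosh (PI * t) * cosh (PI * t)).
  { unfold sinh, cosh; pose proof (exp_pos (PI * t)); pose proof (exp_pos (- (PI * t))); nra. }
  pose proof (sin2_cos2 (PI * s)) as Hsc; unfold Rsqr in Hsc.
  assert (0 <= cos (PI * s) * cos (PI * s)) by nra.
  nra.
Qed.

Lemma Cmod_rational_le (z w : C) : 2 * Cmod z <= Cmod w -> 0 < Cmod w ->
  Cmod (2 * w / (z * z - w * w)) <= 8 / (3 * Cmod w).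
Proof.
  intros Hzw Hw; pose proof (Cmod_ge_0 z).
  assert (Hden : 3 / 4 * (Cmod w * Cmod w) <= Cmod (z * z - w * w)).
  { pose proof (Cmod_triangle (z * z) (- (z * z - w * w))) as T.
    replace (z * z + - (z * z - w * w))%C with (w * w)%C in T by ring.
    rewrite Cmod_opp, !Cmod_mult in T; nra. }
  rewrite Cmod_div, Cmod_mult, Cmod_R, Rabs_pos_eq by (lra || (apply Cmod_gt_0; nra)).
  apply Rle_trans with (2 * Cmod w / (3 / 4 * (Cmod w * Cmod w))).
  - apply Rmult_le_compat_l; [nra|]; apply Rinv_le_contravar; nra.
  - right; field; lra.
Qed.

Lemma I_integrand_decay (z : C) (s t : R) : 1 + 2 * Cmod z <= Rabs t ->
  Cmod (I_integrand z s t) <= Cmod (Ccos (RtoC PI * z)) / (t * t).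
Proof.
  (* [|I_integrand| = |cos (pi z)| |2 w / (z^2 - w^2)| / (2 pi |cos (pi w)|)], with
     [|2 w / (z^2 - w^2)| <= 8 / (3 |t|)], [|cos (pi w)| >= |t|] and [2 pi >= 6]. *)
  intros Ht; pose proof (Cmod_ge_0 z); pose proof PI2_3_2.
  unfold I_integrand, I_kernel.
  set (w := (RtoC s + Ci * RtoC t)%C).
  assert (Hcos := Rabs_le_Cmod_Ccos_PI_mult s t); fold w in Hcos.
  assert (Hw : Rabs t <= Cmod w) by (unfold w; rewrite RtoC_plus_Ci_mult; apply (im_le_Cmod (s, t))).
  assert (Hrat := Cmod_rational_le z w ltac:(lra) ltac:(lra)).
  assert (Hcos0 : Ccos (RtoC PI * w) <> 0%C) by (apply Cmod_gt_0; lra).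
  assert (H2pi : (2 * RtoC PI * Ci)%C <> 0%C).
  { apply Cmod_gt_0; rewrite !Cmod_mult, Cmod_Ci, !Cmod_R, !Rabs_pos_eq; lra. }
  rewrite !Cmod_mult, Cmod_inv, Cmod_div, !Cmod_mult, Cmod_Ci, !Cmod_R, !Rabs_pos_eq
    by (auto || lra).
  set (c := Cmod (Ccos (RtoC PI * z))); assert (0 <= c) by apply Cmod_ge_0.
  set (r := Rabs t) in *.
  assert (Htt : t * t = r * r) by (unfold r; rewrite <- Rabs_mult, Rabs_pos_eq; nra).
  set (A := Cmod (Ccos (RtoC PI * w))) in *; set (B := Cmod (2 * w / (z * z - w * w))) in *.
  assert (Hr : 1 <= r) by lra.
  assert (HA : / A <= / r) by (apply Rinv_le_contravar; lra).
  assert (HB : B <= 8 / 3 * / r).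
  { eapply Rle_trans; [exact Hrat|]; unfold Rdiv; rewrite Rinv_mult, <- Rmult_assoc.
    apply Rmult_le_compat_l; [lra | apply Rinv_le_contravar; lra]. }
  assert (Hpi : / (2 * PI * 1) <= / 6) by (apply Rinv_le_contravar; lra).
  assert (0 <= B) by apply Cmod_ge_0.
  assert (0 < / A) by (apply Rinv_0_lt_compat; lra).
  assert (0 < / (2 * PI * 1)) by (apply Rinv_0_lt_compat; lra).
  assert (HX : c * (/ A * B) <= c * (/ r * (8 / 3 * / r)))
    by (apply Rmult_le_compat_l; [lra | apply Rmult_le_compat; lra]).
  assert (0 <= c * (/ A * B)) by (apply Rmult_le_pos; nra).
  assert (0 <= c * (/ r * / r))
    by (apply Rmult_le_pos; [lra | apply Rmult_le_pos; left; apply Rinv_0_lt_compat; lra]).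
  rewrite Htt; replace (c / (r * r)) with (c * (/ r * / r)) by (field; lra).
  replace (/ (2 * PI * 1) * (c * / A * B * 1)) with (/ (2 * PI * 1) * (c * (/ A * B))) by ring.
  apply Rle_trans with (/ 6 * (c * (/ r * (8 / 3 * / r)))); [apply Rmult_le_compat; lra|].
  replace (/ 6 * (c * (/ r * (8 / 3 * / r)))) with (4 / 9 * (c * (/ r * / r))) by (field; lra).
  lra.
Qed.

Theorem corollary3p5 (beta : R) (hb0 : 0 < beta) (hb1 : beta < 1/2)
  (z : C) (hz : beta < Re z) :
  is_I_beta1 beta z (RtoC 0).
Proof.
  set (b1 := Rmin (1/2) (Re z)).
  assert (Hb1 : beta < b1) by (apply Rmin_glb_lt; lra).
  destruct (is_holo_on_I_integrand z b1 (Rmin_l _ _) (Rmin_r _ _)) as [F' HF].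
  pose proof (Cmod_ge_0 z); pose proof (Cmod_ge_0 (Ccos (RtoC PI * z))).
  apply (holo_odd_line_integral_0 (I_integrand z) F' b1 beta
           (Cmod (Ccos (RtoC PI * z))) (1 + 2 * Cmod z));
    try lra; auto.
  - apply I_integrand_odd.
  - intros s t; apply I_integrand_decay.
Qed.
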